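(* If $Z\subseteq A^+$ is an alt-induced code, then $Z^n$ is an alt-induced code for every integer $n\ge1$.
   Context: $A$ is a finite alphabet, $A^+$ the set of non-empty words; $Z^1=Z$, $Z^{n+1}=Z^nZ$ where $XY=\{xy:x\in X,y\in Y\}$. A set $Z\subseteq A^+$ is a code if every word admits at most one factorization into words of $Z$. For non-empty $X,Y\subseteq A^+$, $(X,Y)$ is an alternative code if no word of $A^+$ admits two different similar alternative factorizations on $(X,Y)$ (factorizations $u_1\cdots u_n$, $n\ge2$, $u_i\in X\cup Y$, alternating between $X$ and $Y$; similar = beginning in the same set and ending in the same set); equivalently, $XY$ is a code and the product $XY$ is unambiguous (each element of $XY$ has exactly one factorization $xy$ with $x\in X,y\in Y$). $Z$ is an alt-induced code if $Z=XY$ for some alternative code $(X,Y)$. *)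

From mathcomp Require Import all_boot.
Set Implicit Arguments. Unset Strict Implicit. Unset Printing Implicit Defensive.

Definition lang (A : finType) := seq A -> Prop.

Definition in_Aplus (A : finType) (Z : lang A) := forall w, Z w -> w <> [::].

Definition lprod (A : finType) (X Y : lang A) : lang A :=
  fun w => exists x y, X x /\ Y y /\ w = x ++ y.

Fixpoint lpow (A : finType) (Z : lang A) (n : nat) : lang A :=
  match n with
  | 0 => fun w => w = [::]
  | 1 => Z
  | m.+1 => lprod (lpow Z m) Z
  end.

(* u = [:: u_0; ...; u_{n-1}] is an alternative factorization on (X,Y)
   beginning in X (b = false) or in Y (b = true): n >= 2 and the factors
   alternate between X and Y.  The word factorized is [flatten u]. *)
Definition alt_fact (A : finType) (X Y : lang A) (b : bool) (u : seq (seq A)) :=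
  1 < size u /\
  forall i, i < size u -> (if b (+) odd i then Y else X) (nth [::] u i).

(* (X,Y) is an alternative code: X, Y nonempty subsets of A^+, and no word
   admits two different similar alternative factorizations (similar = same
   starting set and same ending set; with the same starting set, the ending
   set is determined by the parity of the number of factors). *)
Definition alt_code (A : finType) (X Y : lang A) :=
  (exists x, X x) /\ (exists y, Y y) /\ in_Aplus X /\ in_Aplus Y /\
  forall (b : bool) (u v : seq (seq A)),
    alt_fact X Y b u -> alt_fact X Y b v ->
    odd (size u) = odd (size v) ->
    flatten u = flatten v -> u = v.

Definition alt_induced_code (A : finType) (Z : lang A) :=
  exists X Y : lang A, alt_code X Y /\ forall w, Z w <-> lprod X Y w.

From mathcomp Require Import all_boot.
From Stdlib Require Import Setoid.

Set Implicit Arguments. Unset Strict Implicit. Unset Printing Implicit Defensive.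

(* If Z = XY, then Z^n is the set of words with an alternating factorization
   x_1 y_1 ... x_n y_n on (X,Y), i.e. Z^n = X Y' where Y' = (YX)^(n-1) Y.
   An alternating factorization on (X,Y') expands, by factorizing each
   Y'-factor, into one on (X,Y) with the same product; as every block has an
   odd number of factors, the expansion is again alternating, of the same
   parity, and since the block sizes are fixed the blocks can be read back
   from it.  Hence uniqueness for (X,Y) gives uniqueness for (X,Y'). *)

Section AltWords.
Variables (A : finType) (X Y : lang A).

Fixpoint alt (b : bool) (s : seq (seq A)) : Prop :=
  match s with
  | [::] => True
  | a :: t => (if b then Y else X) a /\ alt (~~ b) t
  end.

Lemma altP b s : alt b s <->
  forall i, i < size s -> (if b (+) odd i then Y else X) (nth [::] s i).
Proof.
elim: s b => [|a t IH] b /=; first by split.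
split.
- move=> [Ha /IH Ht] [|i] /=; first by rewrite addbF.
  by rewrite ltnS addbN -addNb; apply: Ht.
- move=> H; split; first by have := H 0 isT; rewrite addbF.
  by apply/IH => i Hi; have := H i.+1 Hi; rewrite /= addbN -addNb.
Qed.

Lemma alt_cat b s t : alt b (s ++ t) <-> alt b s /\ alt (b (+) odd (size s)) t.
Proof.
elim: s b => [|a s IH] b /=; first by rewrite addbF; split; [|case].
rewrite addbN -addNb.
by split => [[? /IH [? ?]]|[[? ?] ?]]; do ![split=> //]; apply/IH.
Qed.

Definition alt_words (b : bool) (k : nat) : lang A :=
  fun w => exists s, [/\ size s = k, alt b s & w = flatten s].

Lemma alt_words1 b w : alt_words b 1 w <-> (if b then Y else X) w.
Proof.
split => [[[|a [|? ?]] [//= _ [Ha _] ->]]|Hw]; first by rewrite cats0.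
by exists [:: w]; rewrite /= cats0.
Qed.

Lemma alt_words_cat b k l w :
  alt_words b (k + l) w <-> lprod (alt_words b k) (alt_words (b (+) odd k) l) w.
Proof.
split.
- move=> [s [Hs Has ->]].
  have Hk : size (take k s) = k by rewrite size_takel // Hs leq_addr.
  rewrite -(cat_take_drop k s) in Has; move/alt_cat: Has; rewrite Hk => -[H1 H2].
  exists (flatten (take k s)), (flatten (drop k s)).
  split; [by exists (take k s)|split; last by rewrite -flatten_cat cat_take_drop].
  by exists (drop k s); rewrite size_drop Hs addKn.
- move=> [_ [_ [[s [Hs Has ->]] [[t [Ht Hat ->]] ->]]]].
  exists (s ++ t); rewrite size_cat Hs Ht flatten_cat; split => //.
  by apply/alt_cat; rewrite Hs.
Qed.

Lemma alt_words_nonempty b k :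
  (exists x, X x) -> (exists y, Y y) -> exists w, alt_words b k w.
Proof.
move=> [x Hx] [y Hy].
suff [s [Hs Has]] : exists s, size s = k /\ alt b s by exists (flatten s), s.
elim: k b => [|k IH] b; first by exists [::].
have [s [Hs Has]] := IH (~~ b).
by exists ((if b then y else x) :: s); rewrite /= Hs; case: b Has.
Qed.

Lemma alt_words_Aplus b k :
  in_Aplus X -> in_Aplus Y -> 0 < k -> in_Aplus (alt_words b k).
Proof.
move=> HX HY k_gt0 w [[|a s] [Hs Has ->]]; first by rewrite -Hs in k_gt0.
have a_nil : a <> [::] by case: b Has => -[Ha _]; [apply: HY|apply: HX].
by move=> /= /nilP; rewrite cat_nilp => /andP [/nilP].
Qed.

End AltWords.

Section Refinement.
Variables (A : finType) (X Y : lang A) (p q : nat).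
Hypotheses (p_odd : odd p) (q_odd : odd q).

(* [refine b u U]: the factorization [u] on (alt_words false p, alt_words
   true q) is coarsened from [U] on (X,Y) by grouping consecutive blocks. *)
Fixpoint refine (b : bool) (u U : seq (seq A)) : Prop :=
  match u with
  | [::] => U = [::]
  | a :: t => exists s U', [/\ U = s ++ U', a = flatten s,
      size s = (if b then q else p), alt X Y b s & refine (~~ b) t U']
  end.

Lemma refine_exists b u :
  alt (alt_words X Y false p) (alt_words X Y true q) b u -> exists U, refine b u U.
Proof.
elim: u b => [|a t IH] b /=; first by exists [::].
move=> [Ha /IH [U' HU']].
have [s [Hs Has ->]] : alt_words X Y b (if b then q else p) a by case: b {HU'} Ha.
by exists (s ++ U'), s, U'.
Qed.

Lemma refine_alt b u U : refine b u U ->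
  [/\ alt X Y b U, flatten U = flatten u, odd (size U) = odd (size u)
    & size u <= size U].
Proof.
elim: u b U => [|a t IH] b U /=; first by move->.
move=> [s [U' [-> -> Hs Has /IH [HU' HfU' HoU' HsU']]]].
have s_odd : odd (size s) by rewrite Hs; case: (b).
split.
- by apply/alt_cat; rewrite s_odd addbT.
- by rewrite flatten_cat HfU'.
- by rewrite size_cat oddD s_odd HoU'.
- by rewrite size_cat -add1n leq_add // lt0n; apply: contraTneq s_odd => ->.
Qed.

Lemma refine_nil b u : refine b u [::] -> u = [::].
Proof.
case: u => // a t [[|? ?] [? [//= _ _ Hs _ _]]].
by move: Hs; case: (b) => Hs; [move: q_odd|move: p_odd]; rewrite -Hs.
Qed.

Lemma refine_inj b u v U : refine b u U -> refine b v U -> u = v.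
Proof.
elim: u b v U => [|a t IH] b v U /=.
  by move=> -> /refine_nil.
case: v => [|a' t'] /=.
  by move=> HU EU; rewrite EU in HU; have := @refine_nil b (a :: t) HU.
move=> [s [U' [-> -> Hs _ HE]]] [s' [U'' [/eqP HU -> Hs' _ HE']]].
move: HU; rewrite eqseq_cat ?Hs ?Hs' // => /andP [/eqP Es /eqP EU].
by rewrite Es -EU in HE' *; rewrite (IH _ _ _ HE HE').
Qed.

Lemma alt_code_alt_words :
  alt_code X Y -> alt_code (alt_words X Y false p) (alt_words X Y true q).
Proof.
move=> [HXn [HYn [HX [HY Huniq]]]].
have pos k : odd k -> 0 < k by case: k.
split; first exact: alt_words_nonempty.
split; first exact: alt_words_nonempty.
split; first exact: alt_words_Aplus (pos p p_odd).
split; first exact: alt_words_Aplus (pos q q_odd).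
move=> b u v [u_gt1 /altP Hu] [v_gt1 /altP Hv] Hodd Hfl.
have [U HU] := refine_exists Hu; have [V HV] := refine_exists Hv.
have [UA UF UO US] := refine_alt HU; have [VA VF VO VS] := refine_alt HV.
suff EUV : U = V by apply: refine_inj HU _; rewrite EUV.
apply: (Huniq b).
- by split; [exact: leq_trans u_gt1 US|exact/altP].
- by split; [exact: leq_trans v_gt1 VS|exact/altP].
- by rewrite UO VO.
- by rewrite UF VF.
Qed.

End Refinement.

Lemma lprod_iff (A : finType) (X X' Y Y' : lang A) w :
  (forall w, X w <-> X' w) -> (forall w, Y w <-> Y' w) ->
  lprod X Y w <-> lprod X' Y' w.
Proof.
by move=> EX EY; split=> -[x [y [/EX Hx [/EY Hy ->]]]]; exists x, y.
Qed.

Lemma lpow_alt_words (A : finType) (X Y Z : lang A) k w :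
  (forall w, Z w <-> lprod X Y w) ->
  lpow Z k.+1 w <-> alt_words X Y false k.+1.*2 w.
Proof.
move=> HZ.
have Z_alt w' : Z w' <-> alt_words X Y false 2 w'.
  rewrite HZ (alt_words_cat _ _ _ 1 1).
  by apply: lprod_iff => w''; rewrite alt_words1.
elim: k w => [|k IH] w; first exact: Z_alt.
have -> : k.+2.*2 = k.+1.*2 + 2 by rewrite addn2 doubleS.
rewrite alt_words_cat odd_double.
exact: lprod_iff.
Qed.

Theorem propositionL (A : finType) (Z : lang A) :
  alt_induced_code Z -> forall n : nat, 1 <= n -> alt_induced_code (lpow Z n).
Proof.
move=> [X [Y [XYcode HZ]]] [//|m] _.
exists (alt_words X Y false 1), (alt_words X Y true m.*2.+1).
split; first by apply: alt_code_alt_words => //=; rewrite odd_double.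
move=> w; rewrite (lpow_alt_words _ _ HZ) doubleS -add1n.
exact: alt_words_cat.
Qed.
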